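(* Consider a qubit chain with sites indexed by $\mathbb{Z}$ and the Floquet unitary $U=\prod_{i\ \mathrm{odd}}C_{i,i+1}\prod_{i\ \mathrm{even}}C_{i,i+1}$, where each $C_{i,i+1}$ is a two-qubit Clifford gate on sites $(i,i+1)$ that is not in the product class. Let $k\ge1$, $a\in\mathbb{Z}$, and suppose $U$ has an irreducible left $k$-wall around $C=\{a+1,\dots,a+k\}$. Then the first gate $C_{a,a+1}$ and the last gate $C_{a+k,a+k+1}$ of the wall both belong to the $\mathrm{CZ}$-class.
   Context: Two-qubit Clifford gates fall into four classes under $C\mapsto(a_1\otimes a_2)C(a_3\otimes a_4)$ with $a_i$ single-qubit Cliffords (up to global phase): the product class (gates of the form $a\otimes b$), the $\mathrm{CZ}$-class $\{(a_1\otimes a_2)\,\mathrm{CZ}\,(a_3\otimes a_4)\}$ with $\mathrm{CZ}=\mathrm{diag}(1,1,1,-1)$, the $\mathrm{SWAP}$-class $\{(a_1\otimes a_2)\,\mathrm{SWAP}\,(a_3\otimes a_4)\}$, and the $\mathrm{FSWAP}$-class $\{(a_1\otimes a_2)\,\mathrm{CZ}\cdot\mathrm{SWAP}\,(a_3\otimes a_4)\}$. For integers $b\le c$, set $L_b=\{i\le b\}$, $C_{b,c}=\{b+1,\dots,c\}$ (empty if $b=c$), $R_c=\{i>c\}$. $U$ satisfies the left wall condition for $(b,c)$ if for every finitely supported Pauli string $P$ supported in $L_b$ and every integer $t\ge1$, $U^tPU^{-t}$ acts as the identity on every site of $R_c$. $U$ has an irreducible left $k$-wall around $\{a+1,\dots,a+k\}$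 if it satisfies the left wall condition for $(a,a+k)$ but not for any $(b,c)$ with $a\le b\le c\le a+k$ and $(b,c)\ne(a,a+k)$. *)

(* Clifford gates are represented, as is standard, by their
   symplectic action on Pauli operators (modulo phases) over F_2. *)
From HB Require Import structures.
From mathcomp Require Import all_boot all_order all_algebra.
Set Implicit Arguments. Unset Strict Implicit. Unset Printing Implicit Defensive.
Import Order.TTheory GRing.Theory Num.Theory.
Local Open Scope ring_scope.

(* A single-site Pauli operator modulo phase: row vector (x, z) over F_2,
   (0,0) = I, (1,0) = X, (0,1) = Z, (1,1) = Y. *)
Definition pauli1 := 'rV['F_2]_2.

(* Symplectic form on one qubit, and on two qubits (ordering (x1,z1,x2,z2)). *)
Definition J1 : 'M['F_2]_2 := \matrix_(i < 2, j < 2) (if i == j then 0 else 1).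
Definition J2 : 'M['F_2]_(2 + 2) := block_mx J1 0 0 J1.

(* Symplectic matrix of a single-qubit Clifford (modulo phase and Paulis).
   A Clifford acts on Pauli labels by  v |-> v *m M  (Heisenberg picture). *)
Definition clifford1 (M : 'M['F_2]_2) : Prop := M *m J1 *m M^T = J1.
Definition clifford2 (M : 'M['F_2]_(2 + 2)) : Prop := M *m J2 *m M^T = J2.

Definition tensor1 (a b : 'M['F_2]_2) : 'M['F_2]_(2 + 2) := block_mx a 0 0 b.

(* CZ : X1 -> X1 Z2, X2 -> Z1 X2, Z1 -> Z1, Z2 -> Z2. *)
Definition CZmx : 'M['F_2]_(2 + 2) :=
  \matrix_(i < 2 + 2, j < 2 + 2)
    (if i == j then 1
     else if ((i : nat) == 2%N) && ((j : nat) == 1%N) then 1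
     else if ((i : nat) == 0%N) && ((j : nat) == 3%N) then 1 else 0).
Definition SWAPmx : 'M['F_2]_(2 + 2) := block_mx 0 1%:M 1%:M 0.

(* Classes of two-qubit Cliffords under C |-> (a1 (x) a2) C (a3 (x) a4).
   (The symplectic representation is an anti-homomorphism; since all a_i
   range over all single-qubit Cliffords the order of the factors is
   immaterial.) *)
Definition in_class_of (G M : 'M['F_2]_(2 + 2)) : Prop :=
  exists a1 a2 a3 a4 : 'M['F_2]_2,
    [/\ clifford1 a1, clifford1 a2, clifford1 a3, clifford1 a4 &
        M = tensor1 a3 a4 *m G *m tensor1 a1 a2].

Definition product_class (M : 'M['F_2]_(2 + 2)) : Prop :=
  exists a b : 'M['F_2]_2, [/\ clifford1 a, clifford1 b & M = tensor1 a b].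
Definition CZ_class (M : 'M['F_2]_(2 + 2)) : Prop := in_class_of CZmx M.
Definition SWAP_class (M : 'M['F_2]_(2 + 2)) : Prop := in_class_of SWAPmx M.
Definition FSWAP_class (M : 'M['F_2]_(2 + 2)) : Prop :=
  in_class_of (SWAPmx *m CZmx) M.

Definition pstring := int -> pauli1.

Definition finsupp (P : pstring) : Prop :=
  exists m M : int, forall j, P j != 0 -> m <= j <= M.

(* Conjugation by one brickwork layer of gates C i on sites (i, i+1), for all
   i with i = e (mod 2).  The gate covering site j has left site [lsite e j]. *)
Definition lsite (e j : int) : int :=
  if ((j - e) %% 2)%Z == 0 then j else j - 1.

Definition layer (C : int -> 'M['F_2]_(2 + 2)) (e : int) (P : pstring) : pstring :=
  fun j =>
    let i := lsite e j in
    let w : 'rV['F_2]_(2 + 2) := row_mx (P i) (P (i + 1)) *m C i in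
    if i == j then lsubmx w else rsubmx w.

(* U = prod_{i odd} C_{i,i+1} prod_{i even} C_{i,i+1};
   conjU C P = U P U^{-1} (even layer conjugates first, then odd layer). *)
Definition conjU (C : int -> 'M['F_2]_(2 + 2)) (P : pstring) : pstring :=
  layer C 1 (layer C 0 P).

Definition left_wall (C : int -> 'M['F_2]_(2 + 2)) (b c : int) : Prop :=
  forall P : pstring, finsupp P -> (forall j, P j != 0 -> j <= b) ->
  forall t : nat, (1 <= t)%N ->
  forall j, c < j -> iter t (conjU C) P j = 0.

Definition irreducible_left_wall (C : int -> 'M['F_2]_(2 + 2)) (a : int) (k : nat) : Prop :=
  left_wall C a (a + k%:Z) /\
  (forall b c : int, a <= b -> b <= c -> c <= a + k%:Z ->
     (b, c) <> (a, a + k%:Z) -> ~ left_wall C b c).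

(* Write a two-qubit Clifford gate in symplectic form as the block matrix
   [[A, B], [C, D]] over F_2.  If it is not a product gate then B <> 0, and if
   B is singular it has rank one and the gate is a CZ dressed by single-qubit
   Cliffords.  So if a boundary gate of the wall were not in the CZ-class, its
   block B would be invertible: a Pauli entering its left site always leaks to
   its right site, and, dually, one entering its right site under the inverse
   dynamics always leaks to its left site.  At the right end C_{a+k} this
   shows directly that the wall condition still holds for (a, a+k-1).  At the
   left end C_a we use the symplectic pairing of Pauli strings, for which the
   inverse dynamics is the adjoint of the forward one: the wall condition for
   (b, c) says that the inverse dynamics never carries a Pauli from beyond c
   to a site <= b, and the leaking property of C_a extends this from b = a to
   b = a+1.  Either way the wall would not be irreducible. *)
From mathcomp Require Import all_boot all_order all_algebra zify.
Import Order.TTheory GRing.Theory Num.Theory.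
Local Open Scope ring_scope.
Set Implicit Arguments. Unset Strict Implicit. Unset Printing Implicit Defensive.

Lemma pchar_F2 : 2%N \in [pchar 'F_2]. Proof. exact: pchar_Fp. Qed.

Lemma F2_neq0 (x : 'F_2) : (x != 0) = (x == 1).
Proof. by case: x => [[|[|//]]] ?. Qed.

Lemma oppmx_F2 m n (M : 'M['F_2]_(m, n)) : - M = M.
Proof. by apply/matrixP => i j; rewrite mxE (oppr_pchar2 pchar_F2). Qed.

Lemma unitmx_F2 n (M : 'M['F_2]_n) : (M \in unitmx) = (\det M == 1).
Proof. by rewrite unitmxE unitfE F2_neq0. Qed.

Lemma mulmx_unit_eq0 (F : fieldType) m n (p : 'M[F]_(m, n)) (B : 'M_n) :
  B \in unitmx -> p *m B = 0 -> p = 0.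
Proof. by rewrite -row_free_unit => /mulmx_free_eq0 fB /eqP; rewrite fB => /eqP. Qed.

Lemma trmx_J1 : J1^T = J1.
Proof. by apply/matrixP => i j; rewrite !mxE eq_sym. Qed.

Lemma mulmx_J1J1 : J1 *m J1 = 1%:M.
Proof.
apply/matrixP => i j; rewrite !mxE !(big_ord_recl, big_ord0) !mxE /=.
by case: i => [[|[|//]] ?]; case: j => [[|[|//]] ?]; apply/eqP.
Qed.

Lemma adj_F2 (M : 'M['F_2]_2) : \adj M = J1 *m M^T *m J1.
Proof.
apply/matrixP => i j; rewrite !mxE /cofactor det_mx11 !mxE.
rewrite -signr_odd (oppr_pchar2 pchar_F2) expr1n mul1r.
rewrite !(big_ord_recl, big_ord0) !mxE !(big_ord_recl, big_ord0) !mxE /=.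
case: i => [[|[|//]] ?]; case: j => [[|[|//]] ?].
all: rewrite /= ?mul1r ?mulr1 ?mul0r ?mulr0 ?add0r ?addr0.
all: by congr (M _ _); apply/val_inj.
Qed.

Lemma adjM_F2 (M N : 'M['F_2]_2) : \adj (M *m N) = \adj N *m \adj M.
Proof.
by rewrite !adj_F2 trmx_mul !mulmxA -(mulmxA _ J1 J1) mulmx_J1J1 mulmx1.
Qed.

Lemma adj_delta01 : \adj (delta_mx 0 1 : 'M['F_2]_2) = delta_mx 0 1.
Proof.
rewrite adj_F2; apply/matrixP => i j.
do 3 rewrite ?mxE ?(big_ord_recl, big_ord0) /=.
by case: i => [[|[|//]] ?]; case: j => [[|[|//]] ?]; apply/eqP.
Qed.

Lemma mulmx_J1_tr (M : 'M['F_2]_2) : M *m J1 *m M^T = \det M *: J1.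
Proof.
have -> : M *m J1 *m M^T = M *m \adj M *m J1.
  by rewrite adj_F2 !mulmxA -(mulmxA _ J1 J1) mulmx_J1J1 mulmx1.
by rewrite mul_mx_adj mul_scalar_mx.
Qed.

Lemma clifford1_det (M : 'M['F_2]_2) : clifford1 M <-> \det M = 1.
Proof.
rewrite /clifford1 mulmx_J1_tr; split=> [|->]; last by rewrite scale1r.
by move/(congr1 (fun X : 'M_2 => X 0 1)); rewrite !mxE mulr1.
Qed.

Lemma clifford1_unitmx (M : 'M['F_2]_2) : clifford1 M <-> M \in unitmx.
Proof. by rewrite clifford1_det unitmx_F2; split=> [->|/eqP]. Qed.

Lemma clifford1_adj_inv (M : 'M['F_2]_2) : clifford1 M ->
  \adj M *m M = 1%:M /\ M *m \adj M = 1%:M.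
Proof. by move/clifford1_det=> dM; rewrite mul_adj_mx mul_mx_adj dM. Qed.

Lemma clifford1_mul (M N : 'M['F_2]_2) :
  clifford1 M -> clifford1 N -> clifford1 (M *m N).
Proof. by rewrite !clifford1_unitmx unitmx_mul => -> ->. Qed.

Lemma clifford1_adj (M : 'M['F_2]_2) : clifford1 M -> clifford1 (\adj M).
Proof. by case/clifford1_adj_inv=> /mulmx1_unit[uM _] _; apply/clifford1_unitmx. Qed.

Lemma rank1_factor_F2 (B : 'M['F_2]_2) : B != 0 -> B \notin unitmx ->
  exists L R, [/\ clifford1 L, clifford1 R & B = L *m delta_mx 0 1 *m R].
Proof.
move=> nzB nuB.
have rkB : \rank B = 1%N.
  have : \rank B != 0%N by rewrite mxrank_eq0.
  have : \rank B != 2%N by rewrite -row_free_unit in nuB.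
  by have := rank_leq_row B; case: (\rank B) => [|[|[]]].
have pid1 : pid_mx 1 = delta_mx 0 1 *m J1 :> 'M['F_2]_2.
  apply/matrixP => i j; rewrite !mxE !(big_ord_recl, big_ord0) !mxE /=.
  by case: i => [[|[|//]] ?]; case: j => [[|[|//]] ?]; apply/eqP.
exists (col_ebase B), (J1 *m row_ebase B); split.
- exact/clifford1_unitmx/col_ebase_unit.
- apply/clifford1_unitmx; rewrite unitmx_mul row_ebase_unit andbT.
  by case/mulmx1_unit: mulmx_J1J1.
- by rewrite -{1}(mulmx_ebase B) rkB pid1 !mulmxA.
Qed.

Lemma trmx_J2 : J2^T = J2.
Proof. by rewrite /J2 tr_block_mx !trmx0 trmx_J1. Qed.

Lemma mulmx_J2J2 : J2 *m J2 = 1%:M.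
Proof.
by rewrite /J2 mulmx_block !mulmx0 !mul0mx !addr0 !add0r mulmx_J1J1 -scalar_mx_block.
Qed.

Definition symp_adj (G : 'M['F_2]_(2 + 2)) := J2 *m G^T *m J2.

Lemma clifford2_mul_adj G : clifford2 G -> G *m symp_adj G = 1%:M.
Proof. by move=> cG; rewrite /symp_adj !mulmxA cG mulmx_J2J2. Qed.

Lemma clifford2_unitmx G : clifford2 G -> G \in unitmx /\ symp_adj G \in unitmx.
Proof. by move/clifford2_mul_adj/mulmx1_unit. Qed.

Lemma clifford2_tr G : clifford2 G -> clifford2 G^T.
Proof.
move/clifford2_mul_adj/mulmx1C/(congr1 (mulmx J2)).
by rewrite /clifford2 trmxK /symp_adj !mulmxA mulmx_J2J2 mul1mx mulmx1.
Qed.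

Lemma dlsubmx_symp_adj G : dlsubmx (symp_adj G) = \adj (ursubmx G).
Proof.
rewrite /symp_adj /J2 -{1}(submxK G) tr_block_mx !mulmx_block block_mxKdl.
by rewrite !mul0mx !mulmx0 add0r addr0 adj_F2.
Qed.

Lemma clifford2_block (A B Cc D : 'M['F_2]_2) : clifford2 (block_mx A B Cc D) ->
  [/\ A *m J1 *m A^T + B *m J1 *m B^T = J1,
      A *m J1 *m Cc^T + B *m J1 *m D^T = 0
    & Cc *m J1 *m Cc^T + D *m J1 *m D^T = J1].
Proof.
rewrite /clifford2 /J2 tr_block_mx !mulmx_block ?mulmx0 ?mul0mx ?addr0 ?add0r.
by case/eq_block_mx.
Qed.

Lemma product_class_of_ursubmx0 G : clifford2 G -> ursubmx G = 0 -> product_class G.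
Proof.
move=> cG B0; move: cG; rewrite -(submxK G) B0 => /clifford2_block[].
rewrite trmx0 !mulmx0 !mul0mx !addr0 => cA hAC.
have uAJ : ulsubmx G *m J1 \in unitmx.
  by rewrite unitmx_mul (clifford1_unitmx _).1 //=; case/mulmx1_unit: mulmx_J1J1.
have /(congr1 trmx) : (dlsubmx G)^T = 0.
  by rewrite -(mulKmx uAJ (dlsubmx G)^T) hAC mulmx0.
rewrite trmxK trmx0 => ->; rewrite !mul0mx add0r => cD.
by exists (ulsubmx G), (drsubmx G).
Qed.

Lemma clifford2_singular_block (A B Cc D : 'M['F_2]_2) :
  clifford2 (block_mx A B Cc D) -> B \notin unitmx ->
  [/\ clifford1 A, clifford1 D & Cc = D *m \adj B *m A].
Proof.
move=> cG; rewrite unitmx_F2 -F2_neq0 negbK => /eqP dB.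
have [+ hAC _] := clifford2_block cG.
rewrite [B *m _ *m _]mulmx_J1_tr dB scale0r addr0 => cA.
have := clifford2_tr cG; rewrite tr_block_mx => /clifford2_block[_ _].
rewrite [B^T *m _ *m _]mulmx_J1_tr det_tr dB scale0r add0r.
move=> /clifford1_det; rewrite det_tr => /clifford1_det cD.
split=> //.
have cAT : A^T *m J1 *m A = J1.
  have /clifford1_det := cA; rewrite -det_tr => /clifford1_det.
  by rewrite /clifford1 trmxK.
have hCJ : Cc *m J1 *m A^T = D *m J1 *m B^T.
  move/eqP: hAC; rewrite addr_eq0 oppmx_F2 => /eqP/(congr1 trmx).
  by rewrite !trmx_mul !trmxK trmx_J1 !mulmxA.
by rewrite adj_F2 -[Cc]mulmx1 -mulmx_J1J1 -{2}cAT !mulmxA hCJ.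
Qed.

Lemma CZmx_block : CZmx = block_mx 1%:M (delta_mx 0 1) (delta_mx 0 1) 1%:M.
Proof.
rewrite -[CZmx]submxK; congr block_mx; apply/matrixP => i j; rewrite !mxE /=.
all: by case: i => [[|[|//]] ?]; case: j => [[|[|//]] ?]; apply/eqP.
Qed.

Lemma tensor_CZ_tensor (a1 a2 a3 a4 : 'M['F_2]_2) :
  tensor1 a3 a4 *m CZmx *m tensor1 a1 a2 =
  block_mx (a3 *m a1) (a3 *m delta_mx 0 1 *m a2)
           (a4 *m delta_mx 0 1 *m a1) (a4 *m a2).
Proof.
rewrite /tensor1 CZmx_block !mulmx_block !mul0mx !mulmx1 !add0r !addr0.
by rewrite !mulmx0 ?addr0 ?add0r.
Qed.

Lemma CZ_class_of_rank1 (A B Cc D : 'M['F_2]_2) : clifford2 (block_mx A B Cc D) ->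
  B != 0 -> B \notin unitmx -> CZ_class (block_mx A B Cc D).
Proof.
move=> cG nzB nuB; have [cA cD ->] := clifford2_singular_block cG nuB.
have [L [R [cL cR ->]]] := rank1_factor_F2 nzB nuB.
have [_ LadjK] := clifford1_adj_inv cL; have [adjRK _] := clifford1_adj_inv cR.
exists (\adj L *m A), R, L, (D *m \adj R); split.
- exact/clifford1_mul/cA/clifford1_adj.
- exact: cR.
- exact: cL.
- exact/clifford1_mul/clifford1_adj.
rewrite tensor_CZ_tensor !adjM_F2 adj_delta01 [L *m (_ *m A)]mulmxA LadjK mul1mx.
by rewrite -[D *m \adj R *m R]mulmxA adjRK mulmx1 !mulmxA.
Qed.

Lemma CZ_class_of_singular G : clifford2 G -> ~ product_class G ->
  ursubmx G \notin unitmx -> CZ_class G.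
Proof.
move=> cG npG nuB.
have nzB : ursubmx G != 0 by apply/eqP => B0; apply/npG/product_class_of_ursubmx0.
by rewrite -(submxK G) in cG *; apply: CZ_class_of_rank1.
Qed.

Definition aligned (e m : int) : Prop := ((m - e) %% 2)%Z = 0.

Lemma aligned_cases m : aligned 0 m \/ aligned 1 m.
Proof. rewrite /aligned; lia. Qed.

Section Layer.

Variables (G : int -> 'M['F_2]_(2 + 2)) (e : int) (x : pstring) (m : int).
Hypothesis em : aligned e m.

Lemma layer_block :
  row_mx (layer G e x m) (layer G e x (m + 1)) = row_mx (x m) (x (m + 1)) *m G m.
Proof.
have lm : lsite e m = m by rewrite /lsite em.
have lm1 : lsite e (m + 1) = m.
  by rewrite /lsite ifF ?addrK //; apply/eqP; move: em; rewrite /aligned; lia.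
rewrite /layer lm lm1 eqxx ifF ?hsubmxK //; apply/eqP; lia.
Qed.

Lemma layer_l : layer G e x m = lsubmx (row_mx (x m) (x (m + 1)) *m G m).
Proof. by rewrite -layer_block row_mxKl. Qed.

Lemma layer_r : layer G e x (m + 1) = rsubmx (row_mx (x m) (x (m + 1)) *m G m).
Proof. by rewrite -layer_block row_mxKr. Qed.

Lemma layer_eq0 : x m = 0 -> x (m + 1) = 0 ->
  layer G e x m = 0 /\ layer G e x (m + 1) = 0.
Proof.
move=> x0 x1; have /eqP := layer_block; rewrite x0 x1 row_mx0 mul0mx.
by rewrite row_mx_eq0 => /andP[/eqP-> /eqP->].
Qed.

Lemma layer_eq0_inv : G m \in unitmx ->
  layer G e x m = 0 -> layer G e x (m + 1) = 0 -> x m = 0 /\ x (m + 1) = 0.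
Proof.
move=> uG l0 l1; have := layer_block; rewrite l0 l1 row_mx0.
by move=> /esym/(mulmx_unit_eq0 uG)/eqP; rewrite row_mx_eq0 => /andP[/eqP-> /eqP->].
Qed.

Lemma layer_r_of0 : x (m + 1) = 0 -> layer G e x (m + 1) = x m *m ursubmx (G m).
Proof.
move=> x1; rewrite layer_r x1 -{1}(submxK (G m)) mul_row_block.
by rewrite !mul0mx !addr0 row_mxKr.
Qed.

Lemma layer_l_of0 : x m = 0 -> layer G e x m = x (m + 1) *m dlsubmx (G m).
Proof.
move=> x0; rewrite layer_l x0 -{1}(submxK (G m)) mul_row_block.
by rewrite !mul0mx !add0r row_mxKl.
Qed.

End Layer.

Definition symp1 (u v : pauli1) : 'F_2 := (u *m J1 *m v^T) 0 0.
Definition symp2 (w z : 'rV['F_2]_(2 + 2)) : 'F_2 := (w *m J2 *m z^T) 0 0.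

Lemma symp10 v : symp1 0 v = 0. Proof. by rewrite /symp1 !mul0mx mxE. Qed.
Lemma symp1_0 u : symp1 u 0 = 0. Proof. by rewrite /symp1 trmx0 mulmx0 mxE. Qed.

Lemma symp1C u v : symp1 u v = symp1 v u.
Proof.
by rewrite /symp1 -[in LHS](trmxK (u *m J1 *m v^T)) mxE !trmx_mul trmxK trmx_J1 mulmxA.
Qed.

Lemma symp1_nondeg v : (forall u, symp1 u v = 0) -> v = 0.
Proof.
move=> v0; have Jv : J1 *m v^T = 0.
  apply/matrixP => i j; rewrite (ord1 j) [RHS]mxE -(v0 (delta_mx 0 i)).
  by rewrite /symp1 -mulmxA -rowE !mxE.
by rewrite -[v]trmxK -[v^T]mul1mx -mulmx_J1J1 -mulmxA Jv mulmx0 trmx0.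
Qed.

Lemma symp2_row u1 u2 v1 v2 :
  symp2 (row_mx u1 u2) (row_mx v1 v2) = symp1 u1 v1 + symp1 u2 v2.
Proof.
rewrite /symp2 /symp1 /J2 mul_row_block ?mulmx0 ?mul0mx ?addr0 ?add0r.
by rewrite tr_row_mx mul_row_col mxE.
Qed.

Lemma symp2_adj w z G : symp2 (w *m G) z = symp2 w (z *m symp_adj G).
Proof.
rewrite /symp2 /symp_adj !trmx_mul !trmxK trmx_J2 !mulmxA.
by rewrite -(mulmxA w J2 J2) mulmx_J2J2 mulmx1.
Qed.

Definition pairing (m : int) (n : nat) (x y : pstring) : 'F_2 :=
  \sum_(i < n) symp1 (x (m + i%:Z)) (y (m + i%:Z)).

Lemma pairingC m n x y : pairing m n x y = pairing m n y x.
Proof. by apply: eq_bigr => i _; rewrite symp1C. Qed.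

Lemma pairing_recl m n x y :
  pairing m n.+1 x y = symp1 (x m) (y m) + pairing (m + 1) n x y.
Proof.
rewrite /pairing big_ord_recl addr0; congr (_ + _); apply: eq_bigr => i _.
by rewrite /bump /= (_ : m + (1 + i)%:Z = m + 1 + i%:Z) //; lia.
Qed.

Lemma pairing_recr m n x y :
  pairing m n.+1 x y = pairing m n x y + symp1 (x (m + n%:Z)) (y (m + n%:Z)).
Proof. by rewrite /pairing big_ord_recr. Qed.

Lemma pairing_widen m n x y : x (m - 1) = 0 -> x (m + n%:Z) = 0 ->
  pairing (m - 1) n.+2 x y = pairing m n x y.
Proof.
move=> xl xr; rewrite pairing_recr pairing_recl xl symp10 add0r subrK.
by rewrite (_ : m - 1 + n.+1%:Z = m + n%:Z) ?xr ?symp10 ?addr0 //; lia.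
Qed.

Lemma pairing_layer G e m N x y : aligned e m ->
  pairing m (2 * N) (layer G e x) y =
  pairing m (2 * N) x (layer (fun i => symp_adj (G i)) e y).
Proof.
elim: N m => [|N IH] m em; first by rewrite /pairing !big_ord0.
have em2 : aligned e (m + 1 + 1) by move: em; rewrite /aligned; lia.
rewrite (_ : (2 * N.+1 = (2 * N).+2)%N) ?mulnS // !pairing_recl !addrA IH //.
by rewrite -!symp2_row !layer_block // symp2_adj.
Qed.

Definition delta (j : int) (s : pauli1) : pstring := fun i => if i == j then s else 0.

Lemma pairing_delta m n x j s : m <= j < m + n%:Z ->
  pairing m n x (delta j s) = symp1 (x j) s.
Proof.
move=> mj; have jn : (`|j - m| < n)%N by lia.
rewrite /pairing (bigD1 (Ordinal jn)) //= big1 ?addr0.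
  by rewrite /delta (_ : m + `|j - m|%:Z = j) ?eqxx //; lia.
move=> i /eqP ij; rewrite /delta ifN ?symp1_0 //; apply/eqP => e; apply: ij.
by apply/val_inj => /=; lia.
Qed.

Lemma pairing_eq0 m n x y : (forall j, symp1 (x j) (y j) = 0) -> pairing m n x y = 0.
Proof. by move=> xy; rewrite /pairing big1. Qed.

Definition supported (x : pstring) (lo hi : int) : Prop :=
  forall j, j < lo \/ hi < j -> x j = 0.

Lemma finsupp_supported P : finsupp P -> exists lo hi, supported P lo hi.
Proof.
case=> lo [hi inP]; exists lo, hi => j jout.
by apply/eqP; apply: contraTT isT => /inP; lia.
Qed.

Lemma supported_finsupp x lo hi : supported x lo hi -> finsupp x.
Proof.
move=> sx; exists lo, hi => j; apply: contraNT; rewrite negb_and -!ltNge => out.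
by rewrite sx //; case/orP: out; [left | right].
Qed.

Lemma delta_supported j s : supported (delta j s) j j.
Proof. by move=> i ij; rewrite /delta ifN //; apply/eqP; lia. Qed.

Lemma layer_supported G e x lo hi : supported x lo hi ->
  supported (layer G e x) (lo - 1) (hi + 1).
Proof.
move=> sx j hj; rewrite /layer /lsite.
rewrite !sx ?row_mx0 ?mul0mx.
  by case: ifP => _; rewrite -(@row_mx0 _ 1 2 2) ?row_mxKl ?row_mxKr.
all: by case: ifP => _; lia.
Qed.

Lemma conjU_supported C x lo hi : supported x lo hi ->
  supported (conjU C x) (lo - 2) (hi + 2).
Proof.
move=> /(layer_supported C 0)/(layer_supported C 1) sUx j hj.
by apply: sUx; lia.
Qed.

Lemma iter_conjU_supported C x lo hi t : supported x lo hi ->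
  supported (iter t (conjU C) x) (lo - 2 * t%:Z) (hi + 2 * t%:Z).
Proof.
move=> sx; elim: t => [|t IH] j hj; first by apply: sx; lia.
by rewrite iterS; apply: (conjU_supported C IH); lia.
Qed.

(* The adjoint of [conjU C] for [pairing] (see [pairing_conjU]); when all gates
   are Clifford it is conjugation by U^-1. *)
Definition conjU_adj (C : int -> 'M['F_2]_(2 + 2)) (P : pstring) : pstring :=
  layer (fun i => symp_adj (C i)) 0 (layer (fun i => symp_adj (C i)) 1 P).

Lemma pairing_conjU C m N x y lo hi : aligned 1 m -> supported x lo hi ->
  m < lo -> hi + 1 < m + (2 * N)%:Z ->
  pairing m (2 * N) (conjU C x) y = pairing (m - 2) (2 * N.+2) x (conjU_adj C y).
Proof.
move=> m1 sx mlo him.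
have sx0 := layer_supported C 0 sx.
have m0 : aligned 0 (m - 1) by move: m1; rewrite /aligned; lia.
rewrite (pairing_layer C _ _ _ m1) -pairing_widen; [|by apply: sx0; lia..].
have -> : ((2 * N).+2 = 2 * N.+1)%N by lia.
rewrite (pairing_layer C _ _ _ m0) -pairing_widen; [|by apply: sx; lia..].
have -> : ((2 * N.+1).+2 = 2 * N.+2)%N by lia.
by rewrite (_ : m - 1 - 1 = m - 2) //; lia.
Qed.

Lemma pairing_iter_conjU C t x lo hi m N y : supported x lo hi -> aligned 1 m ->
  m + 2 * t%:Z < lo -> hi + 2 * t%:Z + 1 < m + (2 * N)%:Z ->
  pairing m (2 * N) (iter t (conjU C) x) y =
  pairing (m - 2 * t%:Z) (2 * (N + 2 * t)) x (iter t (conjU_adj C) y).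
Proof.
move=> sx; elim: t m N y => [|t IH] m N y m1 mlo him.
  by rewrite mulr0 subr0 muln0 addn0.
have m1' : aligned 1 (m - 2) by move: m1; rewrite /aligned; lia.
rewrite iterS (pairing_conjU C y m1 (iter_conjU_supported C (t := t) sx)); try lia.
rewrite IH // -?iterSr; try lia.
have -> : (2 * (N.+2 + 2 * t) = 2 * (N + 2 * t.+1))%N by lia.
by rewrite (_ : m - 2 - 2 * t%:Z = m - 2 * t.+1%:Z) //; lia.
Qed.

Lemma exists_window (L H : int) (t : nat) :
  exists m N, [/\ aligned 1 m, m + 2 * t%:Z < L & H < m + (2 * N)%:Z].
Proof.
pose m := 2 * (- `|L| - t%:Z - 1) + 1.
by exists m, (absz (H - m)).+1; split; rewrite /m ?/aligned; lia.
Qed.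

Lemma symp1_iter_conjU C t x lo hi j s : supported x lo hi ->
  exists m n, [/\ m <= lo, hi < m + n%:Z &
    symp1 (iter t (conjU C) x j) s = pairing m n x (iter t (conjU_adj C) (delta j s))].
Proof.
move=> sx.
have [m [N [m1 mlo him]]] :=
  exists_window (Num.min lo j) (Num.max hi j + 2 * t%:Z + 1) t.
exists (m - 2 * t%:Z), (2 * (N + 2 * t))%N; split; try lia.
rewrite -(pairing_iter_conjU C (delta j s) sx m1) ?pairing_delta //; lia.
Qed.

Lemma conjU_right_edge (C : int -> 'M['F_2]_(2 + 2)) (c : int) (x : pstring) :
  (forall i, C i \in unitmx) -> ursubmx (C c) \in unitmx ->
  (forall j, c < j -> x j = 0) -> (forall j, c < j -> conjU C x j = 0) ->
  (aligned 0 c -> x c = 0) /\ (aligned 1 c -> conjU C x c = 0).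
Proof.
move=> uC uB x0 Ux0.
have c1c : c < c + 1 by lia.
have c2c : c < c + 1 + 1 by lia.
split=> [c0|c1].
- have c1 : aligned 1 (c + 1) by move: c0; rewrite /aligned; lia.
  have [+ _] := layer_eq0_inv c1 (uC _) (Ux0 _ c1c) (Ux0 _ c2c).
  by rewrite (layer_r_of0 C c0 (x0 _ c1c)) => /(mulmx_unit_eq0 uB).
- have c0 : aligned 0 (c + 1) by move: c1; rewrite /aligned; lia.
  have [Q1 _] := layer_eq0 C c0 (x0 _ c1c) (x0 _ c2c).
  have := Ux0 _ c1c; rewrite /conjU layer_r_of0 // => /(mulmx_unit_eq0 uB) Q0.
  by have [] := layer_eq0 C c1 Q0 Q1.
Qed.

Lemma conjU_adj_left_edge (C : int -> 'M['F_2]_(2 + 2)) (b : int) (x : pstring) :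
  (forall i, symp_adj (C i) \in unitmx) -> dlsubmx (symp_adj (C b)) \in unitmx ->
  (forall i, i <= b -> x i = 0) -> (forall i, i <= b -> conjU_adj C x i = 0) ->
  (aligned 1 b -> x (b + 1) = 0) /\ (aligned 0 b -> conjU_adj C x (b + 1) = 0).
Proof.
move=> uG uB x0 Vx0; pose G i := symp_adj (C i).
have bb : b - 1 <= b by lia.
have bb1 : b - 1 + 1 <= b by lia.
have b1 : b - 1 + 1 = b by lia.
split=> [b1al|b0al].
- have b0 : aligned 0 (b - 1) by move: b1al; rewrite /aligned; lia.
  have [_] := layer_eq0_inv b0 (uG _) (Vx0 _ bb) (Vx0 _ bb1).
  by rewrite b1 (layer_l_of0 G b1al (x0 _ (lexx b))) => /(mulmx_unit_eq0 uB).
- have b1al : aligned 1 (b - 1) by move: b0al; rewrite /aligned; lia.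
  have [_] := layer_eq0 G b1al (x0 _ bb) (x0 _ bb1); rewrite b1 => W0.
  have := Vx0 _ (lexx b); rewrite /conjU_adj -/G (layer_l_of0 G b0al W0).
  move=> /(mulmx_unit_eq0 uB) W1.
  by have [] := layer_eq0 G b0al W0 W1.
Qed.

Lemma left_wall_shrink (C : int -> 'M['F_2]_(2 + 2)) (b c : int) :
  (forall i, C i \in unitmx) -> ursubmx (C c) \in unitmx -> b < c ->
  left_wall C b c -> left_wall C b (c - 1).
Proof.
move=> uC uB bc wall P finP suppP t t1 j jc.
have Zout t' j' : c < j' -> iter t' (conjU C) P j' = 0.
  case: t' => [|t'] j'c; last exact: wall.
  by apply/eqP; apply: contraTT j'c => /suppP; lia.
have [j'c|->] : c < j \/ j = c by lia.
  exact: Zout.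
case: t t1 => [//|t] _.
have edge u := conjU_right_edge uC uB (Zout u) (Zout u.+1).
have [c0|c1] := aligned_cases c.
- by have [/(_ c0)] := edge t.+1.
- by have [_ /(_ c1)] := edge t.
Qed.

Definition dual_wall (C : int -> 'M['F_2]_(2 + 2)) (b c : int) : Prop :=
  forall j, c < j -> forall (s : pauli1) (t : nat) i, i <= b ->
  iter t (conjU_adj C) (delta j s) i = 0.

Lemma left_wallP C b c : b <= c -> left_wall C b c <-> dual_wall C b c.
Proof.
move=> bc; split=> [wall j jc s t i ib | dwall P].
- apply: symp1_nondeg => r.
  have [m [n [mi im e]]] := symp1_iter_conjU C t j s (@delta_supported i r).
  rewrite symp1C -(@pairing_delta m n); last lia.
  rewrite pairingC -e.
  case: t {e} => [|t]; first by rewrite /= /delta ifN ?symp10 //; apply/eqP; lia.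
  rewrite (wall _ (supported_finsupp (@delta_supported i r))) ?symp10 //.
  by move=> i'; rewrite /delta; case: (i' =P i) => [-> _|_]; rewrite ?eqxx.
- move=> /finsupp_supported[lo [hi sP]] inP t t1 j jc.
  apply: symp1_nondeg => s; rewrite symp1C.
  have [m [n [_ _ ->]]] := symp1_iter_conjU C t j s sP.
  apply: pairing_eq0 => i; have [ib|bi] := lerP i b; first by rewrite dwall ?symp1_0.
  by rewrite (_ : P i = 0) ?symp10 //; apply/eqP; apply: contraTT bi => /inP; lia.
Qed.

Lemma dual_wall_grow C b c : (forall i, clifford2 (C i)) ->
  ursubmx (C b) \in unitmx -> b < c -> dual_wall C b c -> dual_wall C (b + 1) c.
Proof.
move=> cC uB bc dwall j jc s t i ib1.
have [ib|->] : i <= b \/ i = b + 1 by lia.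
  exact: dwall.
have uG i' : symp_adj (C i') \in unitmx by have [] := clifford2_unitmx (cC i').
have uGb : dlsubmx (symp_adj (C b)) \in unitmx.
  by rewrite dlsubmx_symp_adj; apply/clifford1_unitmx/clifford1_adj/clifford1_unitmx.
have Z0 u := dwall j jc s u.
have edge u := conjU_adj_left_edge uG uGb (Z0 u) (Z0 u.+1).
have [b0|b1] := aligned_cases b.
- case: t => [|t]; first by rewrite /= /delta ifN //; apply/eqP; lia.
  by have [_ /(_ b0)] := edge t.
- by have [/(_ b1)] := edge t.
Qed.

Theorem lemma7 (C : int -> 'M['F_2]_(2 + 2))
  (hcliff : forall i : int, clifford2 (C i))
  (hnprod : forall i : int, ~ product_class (C i))
  (k : nat) (hk : (1 <= k)%N) (a : int)
  (hwall : irreducible_left_wall C a k) :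
  CZ_class (C a) /\ CZ_class (C (a + k%:Z)).
Proof.
have [wall irreducible] := hwall.
have uC i : C i \in unitmx by have [] := clifford2_unitmx (hcliff i).
have CZ_or_unit i : CZ_class (C i) \/ ursubmx (C i) \in unitmx.
  have [uB|nuB] := boolP (ursubmx (C i) \in unitmx); first by right.
  by left; apply: CZ_class_of_singular.
split.
- have [//|uB] := CZ_or_unit a; exfalso.
  apply: (irreducible (a + 1) (a + k%:Z)); [lia | lia | lia | by case; lia |].
  apply/left_wallP; first lia.
  by apply: dual_wall_grow; [| | lia | apply/left_wallP => //; lia].
- have [//|uB] := CZ_or_unit (a + k%:Z); exfalso.
  apply: (irreducible a (a + k%:Z - 1)); [lia | lia | lia | by case; lia |].
  by apply: left_wall_shrink => //; lia.
Qed.
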